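(* Let $V=\bigoplus_{n\in\mathbb{Z}}V_n$ be a vertex operator algebra and $M$ a subspace of $V$. (1) Suppose $V=\bigoplus_{n=n_0}^{\infty}V_n$ with $n_0<0$ and $V_{n_0}\neq 0$. Then every $v\in\bigoplus_{n=n_0}^{-1}V_n$ lies in $sr_{0,-1}(M)$; in particular $sr_{0,-1}(M)\neq\{0\}$. (2) Suppose $V$ satisfies the $C_2$-cofiniteness condition and $M\supseteq C_2(V)$. If $u\in\bigoplus_{i=1}^{k}V_i$ for some positive integer $k$, then $u\in sr_{0,-1}(M)$.
   Context: A vertex operator algebra is a $\mathbb{Z}$-graded vertex algebra $V=\bigoplus_{n\in\mathbb{Z}}V_n$ over $\mathbb{C}$ (with $Y(u,z)=\sum_n u_nz^{-n-1}$, $\mathbf{1}\in V_0$, and $u_mV_n\subseteq V_{k+n-m-1}$ for $u\in V_k$), with $\dim V_n<\infty$, $V_n=0$ for $n$ sufficiently negative, and a conformal vector $\omega\in V_2$ whose modes $L(n)$ ($Y(\omega,z)=\sum L(n)z^{-n-2}$) satisfy the Virasoro relations, $L(0)$ acts on $V_n$ as $n$, and $Y(L(-1)v,z)=\frac{d}{dz}Y(v,z)$. $C_2(V)=\operatorname{span}_{\mathbb{C}}\{u_{-2}v:u,v\in V\}$; $V$ satisfies the $C_2$-cofiniteness condition if $\dim V/C_2(V)<\infty$. Iterated products are nested to the right: $v_{n_1}\cdots v_{n_t}v=v_{n_1}(\cdots(v_{n_t}v))$. For a subspace $M\subseteq V$: $lsr_{0,-1}(M)$ is the set of $v\in V$ such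 that for every $b\in V$ there is $m\ge0$ with $b_sv_{n_1}\cdots v_{n_t}v\in M$ for all $t\ge m$ and all $s,n_1,\dots,n_t\in\{0,-1\}$. $rsr_{0,-1}(M)$ is the set of $v\in V$ such that for every $w\in V$ there is $m\ge 0$ with $(v_{n_1}\cdots v_{n_t}v)_nw\in M$ for all $t\ge m$ and all $n,n_1,\dots,n_t\in\{0,-1\}$. $sr_{0,-1}(M)=lsr_{0,-1}(M)\cap rsr_{0,-1}(M)$. *)

From HB Require Import structures.
From mathcomp Require Import all_boot all_order all_algebra.
From mathcomp Require Import reals complex.
Set Implicit Arguments. Unset Strict Implicit. Unset Printing Implicit Defensive.
Import Order.TTheory GRing.Theory Num.Theory.
Local Open Scope ring_scope.

Section VOADefs.
Variables (C : fieldType) (V : lmodType C).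

Definition is_subspace (M : V -> Prop) : Prop :=
  M 0 /\ forall (a : C) (x y : V), M x -> M y -> M (a *: x + y).

Definition binz (r : int) (i : nat) : C :=
  (\prod_(j < i) (r%:~R - (j : nat)%:R)) / (i`!)%:R.

(* Vn : int -> V -> Prop is the grading (Vn n = V_n);
   Y u n v = u_n v is the n-th mode (Y(u,z) = sum_n u_n z^{-n-1});
   vac = vacuum vector 1, om = conformal vector omega, c = central charge. *)
Variables (Vn : int -> V -> Prop) (Y : V -> int -> V -> V) (vac om : V) (c : C).

Definition Lop (n : int) (v : V) : V := Y om (n + 1) v.

Definition in_graded_sum (P : int -> bool) (v : V) : Prop :=
  exists s : seq (int * V),
    (forall p, p \in s -> P p.1 /\ Vn p.1 p.2) /\ v = \sum_(p <- s) p.2.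

Record VOA_axioms : Prop := {
  grade_subspace : forall n, is_subspace (Vn n);
  grade_span : forall v : V, in_graded_sum (fun _ => true) v;
  grade_direct : forall s : seq (int * V), uniq (map fst s) ->
      (forall p, p \in s -> Vn p.1 p.2) -> \sum_(p <- s) p.2 = 0 ->
      forall p, p \in s -> p.2 = 0;
  grade_findim : forall n, exists b : seq V, (forall x, x \in b -> Vn n x) /\
      forall x, Vn n x -> exists a : 'I_(size b) -> C,
        x = \sum_(i < size b) a i *: b`_i;
  grade_bounded_below : exists N : int, forall n, n < N -> forall x, Vn n x -> x = 0;
  Y_linear_l : forall n (a : C) u1 u2 v,
      Y (a *: u1 + u2) n v = a *: Y u1 n v + Y u2 n v;
  Y_linear_r : forall u n (a : C) v1 v2,
      Y u n (a *: v1 + v2) = a *: Y u n v1 + Y u n v2;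
  Y_truncation : forall u v, exists N : int, forall n, N <= n -> Y u n v = 0;
  vac_mode : forall n v, Y vac n v = (if n == -1 then v else 0);
  create_vac : forall u, Y u (-1) vac = u /\ forall n, 0 <= n -> Y u n vac = 0;
  (* Borcherds (Jacobi) identity; the sums over i >= 0 are finite by truncation *)
  borcherds : forall u v w (p q r : int), exists N0 : nat, forall N : nat, (N0 <= N)%N ->
      \sum_(i < N) binz p i *: Y (Y u (r + (i : nat)%:Z) v) (p + q - (i : nat)%:Z) w
    = \sum_(i < N) ((-1) ^+ i * binz r i) *:
          (Y u (p + r - (i : nat)%:Z) (Y v (q + (i : nat)%:Z) w)
           - (-1) ^ r *: Y v (q + r - (i : nat)%:Z) (Y u (p + (i : nat)%:Z) w));
  vac_deg : Vn 0 vac;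
  mode_deg : forall (k n m : int) u v, Vn k u -> Vn n v -> Vn (k + n - m - 1) (Y u m v);
  om_deg : Vn 2 om;
  virasoro : forall (m n : int) w,
      Lop m (Lop n w) - Lop n (Lop m w)
    = (m - n)%:~R *: Lop (m + n) w
      + (if m + n == 0 then ((m ^+ 3 - m)%:~R / 12%:R) * c else 0) *: w;
  L0_grading : forall n v, Vn n v -> Lop 0 v = n%:~R *: v;
  L_minus1_derivative : forall v n w, Y (Lop (-1) v) n w = - n%:~R *: Y v (n - 1) w
}.

Definition C2 (x : V) : Prop :=
  exists s : seq (C * V * V), x = \sum_(p <- s) p.1.1 *: Y p.1.2 (-2) p.2.

Definition C2_cofinite : Prop :=
  exists b : seq V, forall x, exists a : 'I_(size b) -> C,
    C2 (x - \sum_(i < size b) a i *: b`_i).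

(* v_{n_1} ... v_{n_t} v, nested to the right, for ns = [:: n_1; ...; n_t] *)
Definition iter_prod (v : V) (ns : seq int) : V := foldr (fun n x => Y v n x) v ns.

Definition in01 (n : int) : bool := (n == 0) || (n == -1).

Definition lsr01 (M : V -> Prop) (v : V) : Prop :=
  forall b : V, exists m : nat, forall (s : int) (ns : seq int),
    (m <= size ns)%N -> in01 s -> all in01 ns -> M (Y b s (iter_prod v ns)).

Definition rsr01 (M : V -> Prop) (v : V) : Prop :=
  forall w : V, exists m : nat, forall (n : int) (ns : seq int),
    (m <= size ns)%N -> in01 n -> all in01 ns -> M (Y (iter_prod v ns) n w).

Definition sr01 (M : V -> Prop) (v : V) : Prop := lsr01 M v /\ rsr01 M v.

End VOADefs.

(* (1) The modes [v_0] and [v_(-1)] of a vector of negative weight lower the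
   weight by at least one, so iterated products of length [|n0|] fall below the
   lowest weight [n0] and vanish.
   (2) [C_2(V)] is stable under the modes [u_n] and [x |-> x_n w] for [n <= 0]
   (commutator and associativity formulas), contains every [u_m v] with
   [m <= -2] (via [L(-1)]) and [u_0 u] (skew symmetry), and, by
   [C_2]-cofiniteness, all of [V_n] for [n] large.  An iterated product of [u]
   containing a [0]-mode is then in [C_2(V)] by induction; one using only
   [(-1)]-modes has weight above its length, hence lies in [C_2(V)] once long. *)

From HB Require Import structures.
From mathcomp Require Import all_boot all_order all_algebra.
From mathcomp Require Import reals complex.
From mathcomp Require Import zify.
Import Order.TTheory GRing.Theory Num.Theory.
Local Open Scope ring_scope.
Set Implicit Arguments. Unset Strict Implicit.

Section Subspace.
Variables (C : fieldType) (V : lmodType C) (M : V -> Prop).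
Hypothesis HM : is_subspace M.

Lemma subspace0 : M 0.
Proof. exact: HM.1. Qed.

Lemma subspaceZ a x : M x -> M (a *: x).
Proof. by move=> Mx; have := HM.2 a x 0 Mx subspace0; rewrite addr0. Qed.

Lemma subspaceD x y : M x -> M y -> M (x + y).
Proof. by move=> Mx My; have := HM.2 1 x y Mx My; rewrite scale1r. Qed.

Lemma subspaceN x : M x -> M (- x).
Proof. by move=> Mx; rewrite -scaleN1r; apply: subspaceZ. Qed.

Lemma subspaceB x y : M x -> M y -> M (x - y).
Proof. by move=> Mx My; apply: subspaceD => //; apply: subspaceN. Qed.

Lemma subspace_sum (I : Type) (r : seq I) (P : pred I) (F : I -> V) :
  (forall i, P i -> M (F i)) -> M (\sum_(i <- r | P i) F i).
Proof. by move=> MF; apply: big_ind => //; [exact: subspace0 | exact: subspaceD]. Qed.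

End Subspace.

Lemma subspace_eq0 (C : fieldType) (V : lmodType C) : is_subspace (fun x : V => x = 0).
Proof. by split=> // a x y -> ->; rewrite scaler0 addr0. Qed.

Section GradedSum.
Variables (C : fieldType) (V : lmodType C).
Implicit Types (G : int -> V -> Prop) (P : pred int).

Lemma in_graded_sum1 G P n x : P n -> G n x -> in_graded_sum G P x.
Proof.
move=> Pn Gx; exists [:: (n, x)]; rewrite big_seq1.
by split=> // p; rewrite inE => /eqP ->.
Qed.

Lemma in_graded_sum_sub G G' P P' x :
    (forall n, P n -> P' n) -> (forall n y, P n -> G n y -> G' n y) ->
  in_graded_sum G P x -> in_graded_sum G' P' x.
Proof. by move=> PP' GG' [s [hs ->]]; exists s; split=> // p /hs [Pp Gp]; auto. Qed.

Lemma in_graded_sumD G P x y :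
  in_graded_sum G P x -> in_graded_sum G P y -> in_graded_sum G P (x + y).
Proof.
move=> [s [hs ->]] [t [ht ->]]; exists (s ++ t); rewrite big_cat.
by split=> // p; rewrite mem_cat => /orP [/hs | /ht].
Qed.

Lemma in_graded_sum_sum G P (I : Type) (r : seq I) (B : pred I) (F : I -> V) :
  (forall i, B i -> in_graded_sum G P (F i)) ->
  in_graded_sum G P (\sum_(i <- r | B i) F i).
Proof.
move=> hF; apply: big_ind => //; last exact: in_graded_sumD.
by exists [::]; rewrite big_nil.
Qed.

Lemma in_graded_sum_subspace G P :
  (forall n, is_subspace (G n)) -> is_subspace (in_graded_sum G P).
Proof.
move=> HG; split=> [|a x y [s [hs ->]] hy]; first by exists [::]; rewrite big_nil.
apply: in_graded_sumD hy; rewrite scaler_sumr big_seq.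
apply: in_graded_sum_sum => p /hs [Pp Gp].
exact: in_graded_sum1 Pp (subspaceZ (HG _) _ Gp).
Qed.

Lemma in_graded_sum_mem G P (Q : V -> Prop) x : is_subspace Q ->
  (forall n y, P n -> G n y -> Q y) -> in_graded_sum G P x -> Q x.
Proof.
move=> HQ GQ [s [hs ->]]; rewrite big_seq.
by apply: (subspace_sum HQ) => p /hs [Pp Gp]; exact: GQ Pp Gp.
Qed.

End GradedSum.

Section VOA.
Variables (C : fieldType) (V : lmodType C).
Variables (Vn : int -> V -> Prop) (Y : V -> int -> V -> V) (vac om : V) (c : C).
Hypothesis HV : VOA_axioms Vn Y vac om c.

Lemma modeDl n u u' w : Y (u + u') n w = Y u n w + Y u' n w.
Proof. by have := Y_linear_l HV n 1 u u' w; rewrite !scale1r. Qed.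

Lemma modeDr u n w w' : Y u n (w + w') = Y u n w + Y u n w'.
Proof. by have := Y_linear_r HV u n 1 w w'; rewrite !scale1r. Qed.

Lemma mode0l n w : Y 0 n w = 0.
Proof. by apply: (@addrI _ (Y 0 n w)); rewrite -modeDl !addr0. Qed.

Lemma mode0r u n : Y u n 0 = 0.
Proof. by apply: (@addrI _ (Y u n 0)); rewrite -modeDr !addr0. Qed.

Lemma modeZl n a u w : Y (a *: u) n w = a *: Y u n w.
Proof. by have := Y_linear_l HV n a u 0 w; rewrite !addr0 mode0l addr0. Qed.

Lemma modeZr u n a w : Y u n (a *: w) = a *: Y u n w.
Proof. by have := Y_linear_r HV u n a w 0; rewrite !addr0 mode0r addr0. Qed.

Lemma mode_suml n w (I : Type) (r : seq I) (P : pred I) (F : I -> V) :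
  Y (\sum_(i <- r | P i) F i) n w = \sum_(i <- r | P i) Y (F i) n w.
Proof.
exact: (big_morph (fun u => Y u n w) (fun u u' => modeDl n u u' w) (mode0l n w)).
Qed.

Lemma mode_sumr u n (I : Type) (r : seq I) (P : pred I) (F : I -> V) :
  Y u n (\sum_(i <- r | P i) F i) = \sum_(i <- r | P i) Y u n (F i).
Proof. exact: (big_morph (Y u n) (modeDr u n) (mode0r u n)). Qed.

Lemma binz0 (r : int) : binz C r 0 = 1.
Proof. by rewrite /binz big_ord0 fact0 divr1. Qed.

Lemma binz0S (i : nat) : binz C 0 i.+1 = 0.
Proof. by rewrite /binz big_ord_recl subrr !mul0r. Qed.

(* [N.+1] keeps the [i = 0] term [(u_0 v)_(p+q) w] visible. *)
Lemma mode_commutator u v w (p q : int) : exists N : nat,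
  Y u p (Y v q w) - Y v q (Y u p w)
  = \sum_(i < N.+1) binz C p i *: Y (Y u i%:Z v) (p + q - i%:Z) w.
Proof.
have [N0 HN] := borcherds HV u v w p q 0; exists N0.
have := HN N0.+1 (leqnSn _).
rewrite [in X in _ = X]big_ord_recl [in X in _ = X]big1 => [|i _]; last first.
  by rewrite binz0S mulr0 scale0r.
rewrite expr0 mul1r binz0 expr0z !scale1r !addr0 => <-.
by apply: eq_bigr => i _; rewrite add0r.
Qed.

Lemma mode_associator u v w (r q : int) : exists N : nat,
  Y (Y u r v) q w
  = \sum_(i < N) ((-1) ^+ i * binz C r i) *:
      (Y u (r - i%:Z) (Y v (q + i%:Z) w) - (-1) ^ r *: Y v (q + r - i%:Z) (Y u i%:Z w)).
Proof.
have [N0 HN] := borcherds HV u v w 0 q r; exists N0.+1.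
have := HN N0.+1 (leqnSn _).
rewrite [in X in X = _]big_ord_recl [in X in X = _]big1 => [|i _]; last first.
  by rewrite binz0S scale0r.
rewrite binz0 scale1r !addr0 !add0r => ->.
by apply: eq_bigr => i _; rewrite !add0r.
Qed.

Lemma in_graded_sum_mode (G : int -> V -> Prop) (P1 P2 P3 : pred int) m x y :
    in_graded_sum Vn P1 x -> in_graded_sum Vn P2 y ->
    (forall k n a b, P1 k -> P2 n -> Vn k a -> Vn n b ->
       P3 (k + n - m - 1) /\ G (k + n - m - 1) (Y a m b)) ->
  in_graded_sum G P3 (Y x m y).
Proof.
move=> [s [hs ->]] [t [ht ->]] hP3.
rewrite mode_suml big_seq; apply: in_graded_sum_sum => p /hs [P1p Vp].
rewrite mode_sumr big_seq; apply: in_graded_sum_sum => q /ht [P2q Vq].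
by have [P3pq Gpq] := hP3 _ _ _ _ P1p P2q Vp Vq; apply: in_graded_sum1 Gpq.
Qed.

Lemma in_graded_sum_iter_prod (A : pred int) (f : nat -> pred int) v ns :
    in_graded_sum Vn (f 0%N) v ->
    (forall j k n m, A m -> f 0%N k -> f j n -> f j.+1 (k + n - m - 1)) ->
  all A ns -> in_graded_sum Vn (f (size ns)) (iter_prod Y v ns).
Proof.
move=> hv hf; elim: ns => [//|m ns IH] /= /andP [Am /IH hns].
apply: in_graded_sum_mode hv hns _ => k n a b fk fn Va Vb.
by split; [exact: hf Am fk fn | exact: (mode_deg HV) Va Vb].
Qed.

Lemma iter_prod_neg_degree v ns :
    in_graded_sum Vn (fun n => n <= -1) v -> all in01 ns ->
  in_graded_sum Vn (fun n => n <= -1 - (size ns)%:Z) (iter_prod Y v ns).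
Proof.
move=> hv; apply: (in_graded_sum_iter_prod (f := fun j n => n <= -1 - j%:Z)).
  by apply: in_graded_sum_sub hv => // n; rewrite subr0.
by move=> j k n m /orP [] /eqP ->; lia.
Qed.

Lemma iter_prod_eventually0 (n0 : int) v ns :
    (forall n, n < n0 -> forall x, Vn n x -> x = 0) ->
    in_graded_sum Vn (fun n => n <= -1) v -> all in01 ns -> (`|n0| <= size ns)%N ->
  iter_prod Y v ns = 0.
Proof.
move=> Vn_below v_neg ns01 ns_large.
apply: in_graded_sum_mem (subspace_eq0 V) _ (iter_prod_neg_degree v_neg ns01).
by move=> n y /= n_small; apply: Vn_below; lia.
Qed.

Lemma iter_prod_pos_degree u ns :
    in_graded_sum Vn (fun n => 0 < n) u -> all (pred1 (-1)) ns ->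
  in_graded_sum Vn (fun n => (size ns)%:Z < n) (iter_prod Y u ns).
Proof.
move=> hu; apply: (in_graded_sum_iter_prod (f := fun j n => j%:Z < n)) => //.
by move=> j k n m /eqP ->; lia.
Qed.

Lemma sum_homogeneous_eq0 (s : seq (int * V)) :
    (forall p, p \in s -> Vn p.1 p.2) -> \sum_(p <- s) p.2 = 0 ->
  forall n, \sum_(p <- s | p.1 == n) p.2 = 0.
Proof.
move=> Vs s_eq0 n.
set ns := undup (map fst s).
set t := [seq (k, \sum_(p <- s | p.1 == k) p.2) | k <- ns].
have Vt : forall q, q \in t -> Vn q.1 q.2.
  move=> q /mapP [k _ ->] /=; rewrite big_seq_cond.
  by apply: (subspace_sum (grade_subspace HV k)) => p /andP [/Vs Vp /eqP <-].
have t_uniq : uniq (map fst t) by rewrite -map_comp map_id undup_uniq.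
have t_eq0 : \sum_(q <- t) q.2 = 0.
  rewrite big_map -[RHS]s_eq0 /=.
  under eq_bigr => k _ do rewrite big_mkcond.
  rewrite exchange_big /=; apply: eq_big_seq => p hp.
  rewrite -big_mkcond /=.
  under eq_bigl => k do rewrite eq_sym.
  rewrite -big_filter filter_pred1_uniq ?undup_uniq ?big_seq1 //.
  by rewrite mem_undup; apply: map_f.
have [n_ns|n_ns] := boolP (n \in ns).
  by apply: (grade_direct HV t_uniq Vt t_eq0 (p := (n, _))); apply/mapP; exists n.
rewrite big_seq_cond big1 // => p /andP [ps /eqP pn].
by move: n_ns; rewrite mem_undup -pn (map_f _ ps).
Qed.

Lemma in_graded_sum_homogeneous (G : int -> V -> Prop) (P : pred int) n x :
    (forall k, is_subspace (G k)) -> (forall k y, G k y -> Vn k y) ->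
  Vn n x -> in_graded_sum G P x -> G n x.
Proof.
move=> HG GV Vx [s [hs ex]].
have Vs : forall p, p \in (n, - x) :: s -> Vn p.1 p.2.
  move=> p; rewrite inE => /predU1P [-> | /hs [_ /GV //]].
  exact: subspaceN (grade_subspace HV n) _ Vx.
have := sum_homogeneous_eq0 Vs _ n; rewrite !big_cons -ex addNr eqxx => /(_ erefl) /eqP.
rewrite /= addrC subr_eq0 => /eqP <-; rewrite big_seq_cond.
by apply: (subspace_sum (HG n)) => p /andP [/hs [_ Gp] /eqP <-].
Qed.

Lemma in_graded_sum_bounded (b : seq V) :
  exists W : int, forall y, y \in b -> in_graded_sum Vn (fun n => n < W) y.
Proof.
elim: b => [|y b [W hW]]; first by exists 0.
have [s [hs ey]] := grade_span HV y.
pose Wy := (\max_(p <- s) `|p.1|%N)%:Z + 1.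
exists (Num.max W Wy) => z; rewrite inE => /predU1P [-> | /hW]; last first.
  by apply: in_graded_sum_sub => // n; rewrite lt_max => ->.
exists s; split=> // p ps; split; last exact: (hs p ps).2.
rewrite lt_max /Wy; apply/orP; right.
apply: le_lt_trans (ler_norm p.1) _; rewrite -abszE ltzD1 lez_nat.
exact: (leq_bigmax_seq (F := fun q : int * V => `|q.1|%N)).
Qed.

Lemma sr01_of_iter_prod (M P : V -> Prop) v (m : nat) :
    (forall b s x, s <= 0 -> P x -> M (Y b s x)) ->
    (forall x n w, n <= 0 -> P x -> M (Y x n w)) ->
    (forall ns, all in01 ns -> (m <= size ns)%N -> P (iter_prod Y v ns)) ->
  sr01 Y M v.
Proof.
have in01_le0 n : in01 n -> n <= 0 by case/orP => /eqP ->.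
move=> PMl PMr Pv; split=> [b | w]; exists m => s ns hsz /in01_le0 hs hns.
  exact: PMl hs (Pv ns hns hsz).
exact: PMr hs (Pv ns hns hsz).
Qed.

Lemma C2_subspace : is_subspace (C2 Y).
Proof.
split=> [|a x y [s ->] [t ->]]; first by exists [::]; rewrite big_nil.
exists ([seq (a * p.1.1, p.1.2, p.2) | p <- s] ++ t).
rewrite big_cat big_map scaler_sumr; congr (_ + _).
by apply: eq_bigr => p _; rewrite scalerA.
Qed.

Lemma C2_modeN2 u v : C2 Y (Y u (-2) v).
Proof. by exists [:: (1, u, v)]; rewrite big_seq1 scale1r. Qed.

Lemma C2_graded x : C2 Y x -> in_graded_sum (fun n y => Vn n y /\ C2 Y y) xpredT x.
Proof.
have HG n : is_subspace (fun y => Vn n y /\ C2 Y y).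
  split=> [|a y z [Vy Cy] [Vz Cz]].
    by split; [exact: subspace0 (grade_subspace HV n) | exact: subspace0 C2_subspace].
  by split; [exact: (grade_subspace HV n).2 | exact: C2_subspace.2].
move=> [s ->]; apply: (subspace_sum (in_graded_sum_subspace _ HG)) => p _.
apply: (subspaceZ (in_graded_sum_subspace _ HG)).
apply: in_graded_sum_mode (grade_span HV _) (grade_span HV _) _ => k n a b _ _ Va Vb.
by split=> //; split; [exact: (mode_deg HV) | exact: C2_modeN2].
Qed.

Section CharacteristicZero.
Hypothesis HC : has_char0 C.

Lemma C2_mode_le u m v : m <= -2 -> C2 Y (Y u m v).
Proof.
move=> m_le; have [j ->] : exists j : nat, m = -2 - j%:Z by exists `|(-2 - m)%R|%N; lia.
elim: j u => [|j IH] u; first by rewrite subr0; apply: C2_modeN2.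
(* [(L(-1) u)_n v = - n u_(n-1) v], and [- n = j + 2] is invertible. *)
have j2_neq0 : (j.+2)%:R != 0 :> C by rewrite (pcharf0P _).1.
have -> : Y u (-2 - (j.+1)%:Z) v = (j.+2)%:R^-1 *: Y (Lop Y om (-1) u) (-2 - j%:Z) v.
  rewrite (L_minus1_derivative HV).
  have -> : - (-2 - j%:Z)%:~R = (j.+2)%:R :> C.
    by rewrite -mulrNz (_ : - (-2 - j%:Z) = (j.+2)%:Z) ?mulrz_nat //; lia.
  rewrite scalerA mulVf // scale1r.
  by congr (Y u _ v); lia.
exact: subspaceZ C2_subspace _ _ (IH _).
Qed.

Lemma C2_mode_closed_l u n x : n <= 0 -> C2 Y x -> C2 Y (Y u n x).
Proof.
move=> n_le0 [s ->]; rewrite mode_sumr; apply: (subspace_sum C2_subspace) => p _.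
rewrite modeZr; apply: (subspaceZ C2_subspace).
have [N comm] := mode_commutator u p.1.2 p.2 n (-2).
rewrite -(subrK (Y p.1.2 (-2) (Y u n p.2)) (Y u n _)) comm.
apply: (subspaceD C2_subspace) (C2_modeN2 _ _).
apply: (subspace_sum C2_subspace) => i _; apply: (subspaceZ C2_subspace).
by apply: C2_mode_le; lia.
Qed.

Lemma C2_mode_closed_r x n w : n <= 0 -> C2 Y x -> C2 Y (Y x n w).
Proof.
move=> n_le0 [s ->]; rewrite mode_suml; apply: (subspace_sum C2_subspace) => p _.
rewrite modeZl; apply: (subspaceZ C2_subspace).
have [N ->] := mode_associator p.1.2 p.2 w (-2) n.
apply: (subspace_sum C2_subspace) => i _; apply: (subspaceZ C2_subspace).
by apply: (subspaceB C2_subspace); last apply: (subspaceZ C2_subspace);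
  apply: C2_mode_le; lia.
Qed.

Lemma C2_mode0_skew u v : C2 Y (Y u 0 v + Y v 0 u).
Proof.
have [N comm] := mode_commutator u v vac (-1) 0.
move: comm; rewrite ((create_vac HV v).2 0) // mode0r (create_vac HV u).1 sub0r.
rewrite big_ord_recl binz0 scale1r /= (create_vac HV _).1 => skew.
rewrite -[Y v 0 u]opprK skew opprD addrA subrr add0r.
apply: (subspaceN C2_subspace); apply: (subspace_sum C2_subspace) => i _.
by apply: (subspaceZ C2_subspace); apply: C2_mode_le; rewrite /bump /=; lia.
Qed.

Lemma C2_mode0_self u : C2 Y (Y u 0 u).
Proof.
have two_neq0 : 2%:R != 0 :> C by rewrite (pcharf0P _).1.
rewrite -[Y u 0 u]scale1r -(mulVf two_neq0) -scalerA scaler_nat mulr2n.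
exact: (subspaceZ C2_subspace) (C2_mode0_skew u u).
Qed.

Lemma C2_mode0_iter_prod_N1 u ns :
  all (pred1 (-1)) ns -> C2 Y (Y u 0 (iter_prod Y u ns)).
Proof.
elim: ns => [_ | m ns IH /= /andP [/eqP -> /IH C2_tail]]; first exact: C2_mode0_self.
have [N comm] := mode_commutator u u (iter_prod Y u ns) 0 (-1).
rewrite -(subrK (Y u (-1) (Y u 0 (iter_prod Y u ns))) (Y u 0 _)) comm.
apply: (subspaceD C2_subspace); last exact: C2_mode_closed_l.
rewrite big_ord_recl; apply: (subspaceD C2_subspace).
  by apply: (subspaceZ C2_subspace); apply: C2_mode_closed_r => //; exact: C2_mode0_self.
apply: (subspace_sum C2_subspace) => i _; apply: (subspaceZ C2_subspace).
by apply: C2_mode_le; rewrite /= /bump /=; lia.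
Qed.

Lemma all_in01_N1 ns : all in01 ns -> 0 \notin ns -> all (pred1 (-1)) ns.
Proof.
move=> /allP ns01 ns_neq0; apply/allP => m mns.
by case/orP: (ns01 m mns) => /eqP m_eq //; rewrite -m_eq mns in ns_neq0.
Qed.

Lemma C2_iter_prod_mem0 u ns : all in01 ns -> 0 \in ns -> C2 Y (iter_prod Y u ns).
Proof.
elim: ns => [//|m ns IH] /= /andP [m01 ns01].
have [ns0 _ | ns_neq0] := boolP (0 \in ns).
  by apply: C2_mode_closed_l; [case/orP: m01 => /eqP -> | exact: IH].
rewrite inE (negbTE ns_neq0) orbF => /eqP <-.
exact: C2_mode0_iter_prod_N1 (all_in01_N1 ns01 ns_neq0).
Qed.

Lemma C2_high_degree : C2_cofinite Y ->
  exists W : int, forall n x, W <= n -> Vn n x -> C2 Y x.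
Proof.
move=> [b b_span]; have [W hW] := in_graded_sum_bounded b; exists W => n x Wn Vx.
(* Components of degree [< W] only come from the span of [b], so the degree-[n]
   component of [x = S + (x - S)] comes from the [C_2] part. *)
pose G k y := Vn k y /\ (W <= k -> C2 Y y).
have HG k : is_subspace (G k).
  split=> [|a y z [Vy Cy] [Vz Cz]].
    split=> [|_]; first exact: subspace0 (grade_subspace HV k).
    exact: subspace0 C2_subspace.
  by split=> [|Wk]; [exact: (grade_subspace HV k).2 | exact: C2_subspace.2 (Cy Wk) (Cz Wk)].
have [a C2_rest] := b_span x; set S := \sum_(i < size b) _ in C2_rest.
have GS : in_graded_sum G xpredT S.
  apply: (subspace_sum (in_graded_sum_subspace _ HG)) => i _.
  apply: (subspaceZ (in_graded_sum_subspace _ HG)).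
  apply: in_graded_sum_sub (hW _ (mem_nth 0 (ltn_ord i))) => // k y Wk Vy.
  by split=> // kW; move: Wk; rewrite ltNge kW.
have Grest : in_graded_sum G xpredT (x - S).
  by apply: in_graded_sum_sub (C2_graded C2_rest) => // k y _ [].
have := subspaceD (in_graded_sum_subspace _ HG) GS Grest; rewrite addrC subrK.
by case/(in_graded_sum_homogeneous HG (fun k y Gy => Gy.1) Vx) => _; apply.
Qed.

Lemma C2_iter_prod_eventually u : C2_cofinite Y ->
    in_graded_sum Vn (fun n => 0 < n) u ->
  exists m, forall ns, all in01 ns -> (m <= size ns)%N -> C2 Y (iter_prod Y u ns).
Proof.
move=> cofin u_pos; have [W hW] := C2_high_degree cofin.
exists `|W|%N => ns ns01 ns_large.
have [ns0 | ns_neq0] := boolP (0 \in ns); first exact: C2_iter_prod_mem0.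
have := iter_prod_pos_degree u_pos (all_in01_N1 ns01 ns_neq0).
by apply: in_graded_sum_mem C2_subspace _ => n y /= n_large; apply: hW; lia.
Qed.

End CharacteristicZero.

End VOA.

Theorem mainTheorem10 (R : realType) (V : lmodType R[i])
    (Vn : int -> V -> Prop) (Y : V -> int -> V -> V) (vac om : V) (c : R[i])
    (HV : VOA_axioms Vn Y vac om c) (M : V -> Prop) (HM : is_subspace M) :
  (* (1) *)
  (forall n0 : int, n0 < 0 -> (exists x, Vn n0 x /\ x <> 0) ->
     (forall n, n < n0 -> forall x, Vn n x -> x = 0) ->
     (forall v, in_graded_sum Vn (fun n => (n0 <= n) && (n <= -1)) v -> sr01 Y M v)
     /\ (exists v, v <> 0 /\ sr01 Y M v))
  /\
  (* (2) *)
  (C2_cofinite Y -> (forall x, C2 Y x -> M x) ->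
     forall (k : nat) (u : V), (0 < k)%N ->
       in_graded_sum Vn (fun n => (1 <= n) && (n <= k%:Z)) u -> sr01 Y M u).
Proof.
split=> [n0 n0_lt0 [x [Vx x_neq0]] Vn_below | cofin C2M k u _ u_deg].
  have sr_neg v : in_graded_sum Vn (fun n => (n0 <= n) && (n <= -1)) v -> sr01 Y M v.
    move=> v_deg; apply: (sr01_of_iter_prod (P := eq^~ 0) (m := `|n0|%N)).
    - by move=> b s _ _ ->; rewrite (mode0r HV); exact: subspace0 HM.
    - by move=> _ n w _ ->; rewrite (mode0l HV); exact: subspace0 HM.
    - move=> ns ns01 ns_large; apply: (iter_prod_eventually0 HV Vn_below _ ns01 ns_large).
      by apply: in_graded_sum_sub v_deg => // n /andP [].
  split=> //; exists x; split=> //; apply: sr_neg; apply: in_graded_sum1 Vx; lia.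
have u_pos : in_graded_sum Vn (fun n => 0 < n) u.
  by apply: in_graded_sum_sub u_deg => // n /andP [].
have HC : has_char0 R[i] := pchar_num _.
have [m C2_iter] := C2_iter_prod_eventually HV HC cofin u_pos.
apply: (sr01_of_iter_prod _ _ C2_iter) => [b s x | x n w] n_le0 Cx; apply: C2M.
  exact: (C2_mode_closed_l HV HC).
exact: (C2_mode_closed_r HV HC).
Qed.
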